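(* Let $W$ be a polynomial representation of $\mathrm{GL}$. Then $\Delta(R\otimes W^{(1)})=0$.
   Context: $k$ is algebraically closed of characteristic $p>0$; $\mathrm{GL}=\bigcup_n\mathrm{GL}_n(k)$, $\mathbf V=\bigcup_n k^n$; $R=\bigwedge(\mathbf V)$. Polynomial representations (subquotients of direct sums of tensor powers of $\mathbf V$) are equivalent to strict polynomial functors, so $M(U)$ makes sense for a vector space $U$. $W^{(1)}$ is the Frobenius twist: the pullback of $W$ along the homomorphism $\mathrm{GL}\to\mathrm{GL}$ raising each matrix entry to the $p$-th power. For an $R$-module $M$ (graded $R$-module with compatible polynomial $\mathrm{GL}$-action), $\Sigma(M)$ is the weight-$1$ subspace of $M(k\oplus\mathbf V)$ for the torus $k^\times$ acting on the new coordinate, $i_M:M\to\Sigma(M)$ is multiplication by the new basis vector $y_1$, and $\Delta(M)=\mathrm{coker}(i_M)$. *)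

From HB Require Import structures.
From mathcomp Require Import all_boot all_order all_algebra.
From mathcomp Require Import mpoly.
Set Implicit Arguments. Unset Strict Implicit. Unset Printing Implicit Defensive.
Import GRing.Theory.
Local Open Scope ring_scope.

(* Vector spaces are k^n, elements are row vectors; a matrix A : 'M_(m,n)
   represents the linear map k^m -> k^n, v |-> v *m A.  Composition of
   A : k^m -> k^n followed by B : k^n -> k^l is A *m B. *)

(* A polynomial representation of GL = (equivalently) a strict polynomial
   functor, given by its values on the spaces k^n and its (polynomial)
   action on all linear maps k^m -> k^n.  Polynomiality is the standard
   (comodule) one: for each vector v, the orbit map A |-> F(A) v is a
   polynomial map with values in a finite-dimensional subspace, i.e. a
   finite sum  sum_j p_j(entries of A) u_j . *)
Record polyFunctor (k : fieldType) := PolyFunctor {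
  pf_obj : nat -> lmodType k;
  pf_map : forall m n, 'M[k]_(m, n) -> pf_obj m -> pf_obj n;
  pf_linear : forall m n (A : 'M[k]_(m, n)) (a : k) (u v : pf_obj m),
      pf_map A (a *: u + v) = a *: pf_map A u + pf_map A v;
  pf_id : forall n (v : pf_obj n), pf_map (1%:M : 'M[k]_n) v = v;
  pf_comp : forall m n l (A : 'M[k]_(m, n)) (B : 'M[k]_(n, l)) (v : pf_obj m),
      pf_map (A *m B) v = pf_map B (pf_map A v);
  pf_poly : forall m n (v : pf_obj m),
      exists s : seq ({mpoly k[m * n]} * pf_obj n),
      forall A : 'M[k]_(m, n),
        pf_map A v = \sum_(q <- s) (q.1).@[fun i => mxvec A 0 i] *: q.2
}.

Section Defs.
Variable k : fieldType.

(* entrywise p-th power: the matrix of the Frobenius-twisted map *)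
Definition frobmx (p : nat) m n (A : 'M[k]_(m, n)) : 'M[k]_(m, n) :=
  map_mx (fun a => a ^+ p) A.

(* Exterior algebra: basis e_S (S ordered increasingly) indexed by subsets.
   Coefficient of e_T in (Lambda A)(e_S): the minor det A[S,T]. *)
Definition extc m n (A : 'M[k]_(m, n)) (S : {set 'I_m}) (T : {set 'I_n}) : k :=
  if (#|S| =P #|T|) is ReflectT h then
    \det (\matrix_(i, j) A (@enum_val _ (mem S) i)
                           (@enum_val _ (mem T) (cast_ord h j)))
  else 0.

(* sign of e_S /\ e_T = sign * e_(S u T) for disjoint S, T *)
Definition wsgn n (S T : {set 'I_n}) : k :=
  (-1) ^+ #|[set st : 'I_n * 'I_n | [&& st.1 \in S, st.2 \in T & (st.2 < st.1)%N]]|.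

End Defs.

Section Module.
Variables (k : fieldType) (W : polyFunctor k) (p : nat).

(* M = R (x) W^(1) evaluated at k^n :  Lambda(k^n) (x) W(k^n), written as
   the coefficient family (e_S-component) S |-> element of W(k^n). *)
Definition Mt n := {set 'I_n} -> pf_obj W n.

(* functoriality of R (x) W^(1) : Lambda(A) (x) W(A^(p)) *)
Definition Mact m n (A : 'M[k]_(m, n)) (x : Mt m) : Mt n :=
  fun T => \sum_(S : {set 'I_m}) extc A S T *: @pf_map k W m n (frobmx p A) (x S).

(* R-module structure: exterior multiplication on the R factor *)
Definition Rmul n (r : {set 'I_n} -> k) (x : Mt n) : Mt n :=
  fun U => \sum_(S : {set 'I_n}) \sum_(T : {set 'I_n})
     (if (S :&: T == set0) && (S :|: T == U) then wsgn k S T * r S else 0) *: x T.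

(* k (+) k^n = k^(n+1), the new coordinate being index 0 *)
Definition ycoord n : {set 'I_n.+1} -> k :=
  fun S => if S == [set ord0] then 1 else 0.

Definition incl n : 'M[k]_(n, n.+1) := row_mx (0 : 'M[k]_(n, 1)) 1%:M.

Definition torus n (t : k) : 'M[k]_(n.+1) :=
  diag_mx (\row_(i < n.+1) if i == ord0 then t else 1).

(* Sigma(M)(k^n): weight-1 subspace of M(k (+) k^n) for the torus k^x *)
Definition weight1 n (x : Mt n.+1) : Prop :=
  forall t : k, t != 0 -> Mact (torus n t) x = (fun T => t *: x T).

Definition iM n (x : Mt n) : Mt n.+1 := Rmul (@ycoord n) (Mact (incl n) x).

End Module.

(* A weight-one vector x of (R (x) W^(1))(k (+) k^n) has exterior components x_U, and
   the torus t acts on x_U by t^[0 \in U] times W applied to the Frobenius twist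
   diag(t^p, 1, ..., 1).  Weight one thus says W(diag(t^p, 1, ..., 1)) x_U equals
   t x_U if 0 \notin U and x_U if 0 \in U.  The orbit t |-> W(diag(t, 1, ..., 1)) x_U
   is a vector-valued polynomial, so comparing coefficients (on the infinitely many
   nonzero t of the closed field) gives x_U = 0 in the first case, as p does not
   divide 1, and W(diag(0, 1, ..., 1)) x_U = x_U in the second.  Since
   diag(0, 1, ..., 1) factors as the projection k (+) k^n -> k^n followed by the
   inclusion, x is y_1 times the image of x under the projection. *)

From HB Require Import structures.
From mathcomp Require Import all_boot all_order all_algebra.
From mathcomp Require Import mpoly.
From Stdlib Require Import FunctionalExtensionality.
Set Implicit Arguments. Unset Strict Implicit. Unset Printing Implicit Defensive.
Import GRing.Theory.
Local Open Scope ring_scope.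

Section VectorPolynomials.
Variables (k : fieldType) (V : lmodType k).
Implicit Type s : seq ({poly k} * V).

Definition vhorner s (t : k) : V := \sum_(q <- s) q.1.[t] *: q.2.

Definition vcoef s (i : nat) : V := \sum_(q <- s) q.1`_i *: q.2.

Lemma vhorner_coef_wide d s t :
  (forall q, q \in s -> size q.1 <= d)%N ->
  vhorner s t = \sum_(i < d) t ^+ i *: vcoef s i.
Proof.
move=> s_le_d; rewrite /vhorner big_seq.
under eq_bigr => q /s_le_d/horner_coef_wide-> do rewrite scaler_suml.
rewrite -big_seq exchange_big; apply: eq_bigr => i _.
by rewrite scaler_sumr; apply: eq_bigr => q _; rewrite mulrC scalerA.
Qed.

Lemma vhorner0 s : vhorner s 0 = vcoef s 0.
Proof. by apply: eq_bigr => q _; rewrite horner_coef0. Qed.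

Lemma vcoef_comp_Xn s (p i : nat) : (0 < p)%N ->
  vcoef [seq (q.1 \Po 'X^p, q.2) | q <- s] i
  = if (p %| i)%N then vcoef s (i %/ p)%N else 0.
Proof.
move=> p_gt0; rewrite /vcoef big_map.
under eq_bigr do rewrite coef_comp_poly_Xn //.
by case: ifP => _; last by rewrite big1 // => q _; rewrite scale0r.
Qed.

Lemma Vandermonde_lin_indep d (a : 'rV[k]_d) (w : 'I_d -> V) :
  (forall i j, i != j -> a 0 i != a 0 j) ->
  (forall j, \sum_(i < d) a 0 j ^+ i *: w i = 0) -> forall i, w i = 0.
Proof.
move=> a_inj sum_eq0 i; set M := Vandermonde d a.
have M_unit : M \in unitmx.
  rewrite unitmxE det_Vandermonde unitfE; apply/prodf_neq0 => i0 _.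
  apply/prodf_neq0 => j0 lt_i0j0; rewrite subr_eq0 a_inj // eq_sym.
  by apply: contraTneq lt_i0j0 => ->; rewrite ltnn.
have -> : w i = \sum_(l < d) (M *m invmx M) l i *: w l.
  rewrite mulmxV // (bigD1 i) //= big1 ?addr0 => [|l nli].
    by rewrite mxE eqxx scale1r.
  by rewrite mxE (negbTE nli) scale0r.
under eq_bigr do rewrite mxE scaler_suml.
rewrite exchange_big big1 // => j _.
under eq_bigr do rewrite mxE mulrC -scalerA.
by rewrite -scaler_sumr sum_eq0 scaler0.
Qed.

End VectorPolynomials.

Lemma closed_field_fresh (k : closedFieldType) (s : seq k) : exists r, r \notin s.
Proof.
pose P := \prod_(a <- 0 :: s) ('X - a%:P) + 1.
have P_nconst : size P != 1%N by rewrite size_polyDl size_prod_XsubC ?size_poly1.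
have [r rootPr] := closed_rootP P P_nconst; exists r; apply: contraL rootPr => r_s.
have /rootP prod_r : root (\prod_(a <- 0 :: s) ('X - a%:P)) r.
  by rewrite root_prod_XsubC inE r_s orbT.
by rewrite /root /P hornerD hornerC prod_r add0r oner_eq0.
Qed.

Lemma closed_field_distinct_nonzero (k : closedFieldType) (d : nat) :
  exists a : 'rV[k]_d, (forall i j, i != j -> a 0 i != a 0 j) /\ (forall i, a 0 i != 0).
Proof.
have [s [size_s uniq_s]] : exists s : seq k, size s = d /\ uniq (0 :: s).
  elim: d => [|d [s [size_s uniq_s]]]; first by exists [::].
  have [r r_fresh] := closed_field_fresh (0 :: s); exists (r :: s).
  move: r_fresh uniq_s; rewrite /= size_s !inE => /norP[r_neq0 r_s] /andP[s_neq0 ->].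
  by rewrite negb_or eq_sym r_neq0 s_neq0 r_s.
move: uniq_s => /= /andP[s_neq0 uniq_s]; exists (\row_j s`_j); split=> [i j|i].
  by rewrite !mxE nth_uniq ?size_s.
by rewrite mxE; apply: contraNneq s_neq0 => <-; rewrite mem_nth ?size_s.
Qed.

Lemma vcoef_eq0 (k : closedFieldType) (V : lmodType k) (s : seq ({poly k} * V)) :
  (forall t, t != 0 -> vhorner s t = 0) -> forall i, vcoef s i = 0.
Proof.
move=> vanish i; pose d := (i + \sum_(q <- s) size q.1).+1.
have s_le_d q : q \in s -> (size q.1 <= d)%N.
  by move=> q_s; rewrite /d (big_rem _ q_s) /= addnCA ltnW // ltnS leq_addr.
have [a [a_inj a_neq0]] := closed_field_distinct_nonzero k d.
have lt_id : (i < d)%N by rewrite ltnS leq_addr.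
apply: (Vandermonde_lin_indep (w := fun j : 'I_d => vcoef s j) a_inj _ (Ordinal lt_id)).
by move=> j; rewrite -vhorner_coef_wide ?vanish.
Qed.

Lemma meval_horner_poly (k : fieldType) N (e : 'I_N -> {poly k}) (q : {mpoly k[N]}) :
  exists Q : {poly k}, forall t, q.@[fun i => (e i).[t]] = Q.[t].
Proof.
exists (\sum_(m <- msupp q) q@_m *: \prod_(i < N) e i ^+ m i) => t.
rewrite mevalE horner_sum; apply: eq_bigr => m _.
by rewrite hornerZ horner_prod; congr (_ * _); apply: eq_bigr => i _; rewrite horner_exp.
Qed.

Lemma pf_map_poly_mx (k : fieldType) (W : polyFunctor k) m n
    (P : 'M[{poly k}]_(m, n)) (v : pf_obj W m) :
  exists s, forall t, pf_map (map_mx (horner_eval t) P) v = vhorner s t.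
Proof.
have [s0 pf_map_vE] := pf_poly n v.
suff [s sE] : exists s, forall t,
    \sum_(q <- s0) q.1.@[fun i => mxvec (map_mx (horner_eval t) P) 0 i] *: q.2
    = vhorner s t.
  by exists s => t; rewrite pf_map_vE sE.
elim: s0 {pf_map_vE} => [|q s0 [s sE]]; first by exists [::] => t; rewrite /vhorner !big_nil.
have [Q QE] := meval_horner_poly (fun i => mxvec P 0 i) q.1.
exists ((Q, q.2) :: s) => t; rewrite /vhorner !big_cons -/(vhorner s t) sE -QE.
by congr (_ *: _ + _); apply: meval_eq => i; rewrite -map_mxvec mxE.
Qed.

Lemma torus_horner_eval (k : fieldType) n (t : k) :
  torus n t = map_mx (horner_eval t) (diag_mx (\row_(i < n.+1) if i == ord0 then 'X else 1)).
Proof.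
rewrite map_diag_mx; congr diag_mx; apply/rowP => i; rewrite !mxE.
by case: ifP => _; rewrite ?rmorph1 // [RHS]hornerX.
Qed.

Section TorusWeights.
Variables (k : closedFieldType) (W : polyFunctor k) (n p : nat) (v : pf_obj W n.+1).

Lemma torus_Frobenius_weight_coef (c : {poly k}) : (0 < p)%N ->
  (forall t, t != 0 -> pf_map (torus n (t ^+ p)) v = c.[t] *: v) ->
  exists s, (forall t, pf_map (torus n t) v = vhorner s t) /\
    forall i, c`_i *: v = if (p %| i)%N then vcoef s (i %/ p)%N else 0.
Proof.
move=> p_gt0 weight_c.
have [s orbitE] := pf_map_poly_mx (diag_mx (\row_(i < n.+1) if i == ord0 then 'X else 1)) v.
have {}orbitE t : pf_map (torus n t) v = vhorner s t by rewrite torus_horner_eval.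
exists s; split=> // i.
pose sp := [seq (q.1 \Po 'X^p, q.2) | q <- s].
have /vcoef_eq0/(_ i) : forall t, t != 0 -> vhorner ((- c, v) :: sp) t = 0.
  move=> t t_neq0; rewrite /vhorner big_cons big_map /=.
  under eq_bigr do rewrite horner_comp hornerXn.
  by rewrite -[\sum_(_ <- _) _]/(vhorner s _) -orbitE weight_c // hornerN scaleNr addNr.
rewrite {1}/vcoef big_cons -[\sum_(_ <- _) _]/(vcoef sp i) vcoef_comp_Xn //= coefN scaleNr.
by move/eqP; rewrite addrC subr_eq0 => /eqP.
Qed.

Lemma torus_Frobenius_weight1_eq0 : (1 < p)%N ->
  (forall t, t != 0 -> pf_map (torus n (t ^+ p)) v = t *: v) -> v = 0.
Proof.
move=> p_gt1 weight1.
have weightX t : t != 0 -> pf_map (torus n (t ^+ p)) v = ('X : {poly k}).[t] *: v.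
  by move=> t_neq0; rewrite hornerX weight1.
have [s [_ /(_ 1%N)]] := torus_Frobenius_weight_coef (ltnW p_gt1) weightX.
by rewrite coefX scale1r dvdn1 gtn_eqF.
Qed.

Lemma torus_Frobenius_weight0_at0 : (0 < p)%N ->
  (forall t, t != 0 -> pf_map (torus n (t ^+ p)) v = v) -> pf_map (torus n 0) v = v.
Proof.
move=> p_gt0 weight0.
have weightC t : t != 0 -> pf_map (torus n (t ^+ p)) v = (1 : {poly k}).[t] *: v.
  by move=> t_neq0; rewrite hornerC scale1r weight0.
have [s [-> /(_ 0%N)]] := torus_Frobenius_weight_coef p_gt0 weightC.
by rewrite coefC scale1r dvdn0 div0n vhorner0 => ->.
Qed.

End TorusWeights.

Section Minors.
Variable k : fieldType.

Lemma extc_eq0_row m n (A : 'M[k]_(m, n)) (S : {set 'I_m}) (T : {set 'I_n}) i :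
  i \in S -> (forall j, j \in T -> A i j = 0) -> extc A S T = 0.
Proof.
move=> i_S rowi_eq0; rewrite /extc; case: eqP => // cardST.
rewrite (expand_det_row _ (enum_rank_in i_S i)) big1 // => j _.
by rewrite mxE enum_rankK_in // rowi_eq0 ?mul0r // enum_valP.
Qed.

Lemma extc_graph_eq0 m n (A : 'M[k]_(m, n)) (f : 'I_m -> 'I_n)
    (S : {set 'I_m}) (T : {set 'I_n}) :
  injective f -> (forall i j, j != f i -> A i j = 0) ->
  f @: S != T -> extc A S T = 0.
Proof.
move=> f_inj A_graph fS_neqT; case: (#|S| =P #|T|) => [cardST|]; last first.
  by rewrite /extc; case: eqP.
have card_fS : #|f @: S| = #|T| by rewrite card_imset.
have [fS_T|/subsetPn[_ /imsetP[i i_S ->] fi_T]] := boolP (f @: S \subset T).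
  by case/eqP: fS_neqT; apply/setP/(subset_cardP card_fS).
apply: (extc_eq0_row i_S) => j j_T; apply: A_graph.
by apply: contraNneq fi_T => <-.
Qed.

Lemma extc_diag_mx n (d : 'rV[k]_n) (S T : {set 'I_n}) :
  extc (diag_mx d) S T = if S == T then \prod_(i in T) d 0 i else 0.
Proof.
case: eqP => [<-|/eqP S_neqT]; last first.
  apply: (@extc_graph_eq0 _ _ _ id) => // [i j|]; first by rewrite mxE eq_sym => /negbTE->.
  by rewrite imset_id.
rewrite /extc; case: eqP => [cardSS|/(_ erefl)//].
rewrite (_ : \matrix_(i, j) _ = diag_mx (\row_i d 0 (@enum_val _ (mem S) i))).
  by rewrite det_diag [RHS]big_enum_val; apply: eq_bigr => i _; rewrite mxE.
by apply/matrixP => i j; rewrite !mxE cast_ord_id (inj_eq enum_val_inj).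
Qed.

Lemma incl_graph n (i : 'I_n) (j : 'I_n.+1) : incl k n i j = (j == lift ord0 i)%:R.
Proof.
rewrite /incl mxE -val_eqE /= /bump leq0n add1n.
by case: splitP => j' ->; rewrite mxE ?(ord1 j') // eqSS eq_sym.
Qed.

Lemma enum_imset_lift0 n (S : {set 'I_n}) :
  enum (lift ord0 @: S) = map (lift ord0) (enum S).
Proof.
rewrite /enum_mem -!enumT enum_ordSl /= filter_map.
have /negbTE-> : ord0 \notin lift ord0 @: S.
  by apply/imsetP => -[i _ /eqP]; rewrite (negbTE (neq_lift _ _)).
by congr map; apply: eq_filter => i /=; rewrite mem_imset //; apply: lift_inj.
Qed.

Lemma extc_incl_lift0 n (S T : {set 'I_n}) :
  extc (incl k n) S (lift ord0 @: T) = (S == T)%:R.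
Proof.
case: eqP => [<-|/eqP S_neqT]; last first.
  apply: (@extc_graph_eq0 _ _ _ (fun i : 'I_n => lift ord0 i)) => [|i j|].
  - exact: lift_inj.
  - by rewrite incl_graph => /negbTE->.
  - by rewrite (inj_eq (imset_inj (@lift_inj _ ord0))).
have cardS : #|S| = #|lift ord0 @: S| by rewrite card_imset //; apply: lift_inj.
rewrite /extc; case: eqP => [{}cardS|/(_ cardS)//].
have enum_valE j : @enum_val _ (mem (lift ord0 @: S)) (cast_ord cardS j)
                   = lift ord0 (@enum_val _ (mem S) j).
  by rewrite /enum_val /= enum_imset_lift0 (nth_map (enum_default j)) // -cardE.
rewrite (_ : \matrix_(i, j) _ = 1%:M) ?det1 //; apply/matrixP => i j.
rewrite [LHS]mxE [RHS]mxE incl_graph enum_valE (inj_eq lift_inj) (inj_eq enum_val_inj).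
by rewrite eq_sym.
Qed.

End Minors.

Section Frobenius.
Variables (k : fieldType) (p : nat).
Hypothesis pchar_p : p \in [pchar k].

Lemma frobmxE m n (A : 'M[k]_(m, n)) : frobmx p A = map_mx (pFrobenius_aut pchar_p) A.
Proof. by []. Qed.

Lemma frobmx_incl n : frobmx p (incl k n) = incl k n.
Proof.
by apply/matrixP => i j; rewrite frobmxE mxE !incl_graph rmorph_nat.
Qed.

Lemma frobmx_torus n (t : k) : frobmx p (torus n t) = torus n (t ^+ p).
Proof.
rewrite frobmxE map_diag_mx; congr diag_mx; apply/rowP => i; rewrite !mxE.
by case: ifP => _; rewrite ?rmorph1.
Qed.

End Frobenius.

Lemma disjoint_setU1E (T : finType) (a : T) (A B : {set T}) :
  ([set a] :&: A == set0) && ([set a] :|: A == B) = (a \in B) && (A == B :\ a).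
Proof.
rewrite setI_eq0 disjoints1; apply/andP/andP => [[a_A /eqP<-]|[a_B /eqP->]].
  by rewrite setU11 setU1K.
by rewrite setD11 setD1K.
Qed.

Lemma wsgn_set1_ord0 (k : fieldType) n (T : {set 'I_n.+1}) : wsgn k [set ord0] T = 1.
Proof.
rewrite /wsgn (_ : [set _ | _] = set0) ?cards0 //.
by apply/setP => -[i j]; rewrite !inE /=; case: eqP => // ->; rewrite andbF.
Qed.

Section ModuleStructure.
Variables (k : fieldType) (W : polyFunctor k) (p : nat).

Lemma Mact_diag_mx n (d : 'rV[k]_n) (x : Mt W n) (T : {set 'I_n}) :
  Mact p (diag_mx d) x T = (\prod_(i in T) d 0 i) *: pf_map (frobmx p (diag_mx d)) (x T).
Proof.
rewrite /Mact (bigD1 T) //= big1 ?addr0 => [|S /negbTE S_neqT].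
  by rewrite extc_diag_mx eqxx.
by rewrite extc_diag_mx S_neqT scale0r.
Qed.

Lemma Mact_incl_lift0 n (y : Mt W n) (S : {set 'I_n}) :
  Mact p (incl k n) y (lift ord0 @: S) = pf_map (frobmx p (incl k n)) (y S).
Proof.
rewrite /Mact (bigD1 S) //= big1 ?addr0 => [|T /negbTE T_neqS].
  by rewrite extc_incl_lift0 eqxx scale1r.
by rewrite extc_incl_lift0 T_neqS scale0r.
Qed.

Lemma Mact_torus n (t : k) (x : Mt W n.+1) (T : {set 'I_n.+1}) : p \in [pchar k] ->
  Mact p (torus n t) x T = (if ord0 \in T then t else 1) *: pf_map (torus n (t ^+ p)) (x T).
Proof.
move=> pchar_p; rewrite Mact_diag_mx -/(torus n t) frobmx_torus //; congr (_ *: _).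
have [T0|T_neq0] := boolP (ord0 \in T).
  rewrite (bigD1 ord0) //= mxE eqxx big1 ?mulr1 // => i /andP[_ /negbTE i_neq0].
  by rewrite mxE i_neq0.
by rewrite big1 // => i i_T; rewrite mxE; case: eqP => // i0; rewrite -i0 i_T in T_neq0.
Qed.

Lemma Rmul_ycoord n (z : Mt W n.+1) (U : {set 'I_n.+1}) :
  Rmul (@ycoord k n) z U = if ord0 \in U then z (U :\ ord0) else 0.
Proof.
rewrite /Rmul (bigD1 [set ord0]) //= [X in _ + X]big1 ?addr0 => [|S /negbTE S_neq]; last first.
  by apply: big1 => T _; rewrite /ycoord S_neq mulr0 if_same scale0r.
rewrite /ycoord eqxx.
under eq_bigr => T _ do
  rewrite wsgn_set1_ord0 mulr1 disjoint_setU1E (fun_if ( *:%R^~ (z T))) scale1r scale0r.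
rewrite -big_mkcond; case: ifP => [U0|_]; last by rewrite big_pred0.
by rewrite (big_pred1 (U :\ ord0)) // => T; rewrite andbC.
Qed.

End ModuleStructure.

Lemma imset_lift0_preimset n (U : {set 'I_n.+1}) :
  lift ord0 @: [set i | lift ord0 i \in U] = U :\ ord0.
Proof.
apply/setP => j; rewrite !inE; case: (unliftP ord0 j) => [i ->|->].
  by rewrite mem_imset ?inE 1?eq_sym ?neq_lift //; apply: lift_inj.
by rewrite eqxx; apply/imsetP => -[i _ /eqP]; rewrite (negbTE (neq_lift _ _)).
Qed.

Definition projmx (k : fieldType) n : 'M[k]_(n.+1, n) :=
  \matrix_(i, j) (i == lift ord0 j)%:R.

Lemma projmx_incl (k : fieldType) n : projmx k n *m incl k n = torus n 0.
Proof.
apply/matrixP => i j; rewrite /torus [LHS]mxE [RHS]mxE [X in _ = X *+ _]mxE.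
case: (unliftP ord0 i) => [i' ->|->]; last first.
  rewrite eqxx mul0rn big1 // => l _.
  by rewrite mxE (negbTE (neq_lift _ _)) mul0r.
rewrite eq_sym (negbTE (neq_lift _ _)) (bigD1 i') //= big1 ?addr0 => [|l /negbTE l_neq_i'].
  by rewrite mxE eqxx mul1r incl_graph eq_sym.
by rewrite mxE (inj_eq lift_inj) eq_sym l_neq_i' mul0r.
Qed.

Unset Implicit Arguments. Set Strict Implicit.

Theorem corollary4p4 (k : closedFieldType) (p : nat) (Hp : p \in [pchar k])
  (W : polyFunctor k) (n : nat) (x : Mt W n.+1) :
  weight1 p x -> exists y : Mt W n, iM p y = x.
Proof.
move=> weight1_x.
have p_gt1 : (1 < p)%N by apply/prime_gt1/(pcharf_prime Hp).
have weightU (U : {set 'I_n.+1}) t : t != 0 ->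
    (if ord0 \in U then t else 1) *: pf_map (torus n (t ^+ p)) (x U) = t *: x U.
  by move=> t_neq0; rewrite -Mact_torus // weight1_x.
have x_out (U : {set 'I_n.+1}) : ord0 \notin U -> x U = 0.
  move=> U0; apply: (torus_Frobenius_weight1_eq0 p_gt1) => t t_neq0.
  by have := weightU U t t_neq0; rewrite (negbTE U0) scale1r.
have x_in (U : {set 'I_n.+1}) : ord0 \in U -> pf_map (torus n 0) (x U) = x U.
  move=> U0; apply: (torus_Frobenius_weight0_at0 (ltnW p_gt1)) => t t_neq0.
  by have := weightU U t t_neq0; rewrite U0 => /(scalerI t_neq0).
exists (fun S : {set 'I_n} => pf_map (projmx k n) (x (ord0 |: lift ord0 @: S))).
apply: functional_extensionality => U; rewrite /iM Rmul_ycoord.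
case: ifPn => [U0|/x_out-> //].
rewrite -imset_lift0_preimset Mact_incl_lift0 frobmx_incl // imset_lift0_preimset.
by rewrite setD1K // -pf_comp projmx_incl x_in.
Qed.
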